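(* Consider the allocation problem with $m$ divisible goods and $n$ agents as described in the context, and let $\pi=(\pi_1,\ldots,\pi_n)$ be the agents' true preference lists. Let $a^\pi$ be the allocation produced by the Synchronized Greedy (SG) mechanism when every agent $i$ bids $\pi_i$. Then for every allocation $a\neq a^\pi$ there exists an agent $i$ such that $a^\pi_{i*} >_i a_{i*}$.
   Context: There are $m$ distinct divisible goods; good $j$ ($1\le j\le m$) is available in amount $q_j>0$. There are $n$ agents; agent $i$ ($1\le i\le n$) is to receive a total of $r_i>0$. Assume $\sum_j q_j=\sum_i r_i$. An allocation is a family of numbers $a_{ij}\ge 0$ with $\sum_j a_{ij}=r_i$ for all $i$ and $\sum_i a_{ij}=q_j$ for all $j$; $a_{i*}=(a_{i1},\ldots,a_{im})$ is agent $i$'s share. Each agent $i$ has a true preference list $\pi_i$, a permutation of the goods ($\pi_i(1)$ is the most preferred good). Agent $i$ (lexicographically) prefers share $a_{i*}$ to $b_{i*}$, written $a_{i*}>_i b_{i*}$, if the leftmost nonzero coordinate of $(a_{i\pi_i(1)}-b_{i\pi_i(1)},\ldots,a_{i\pi_i(m)}-b_{i\pi_i(m)})$ is positive. The SG mechanism: each agent $i$ submits a bid $\sigma_i$, a permutation of the goods. The mechanism runs a continuous process over time $t\in[0,1]$: at each time, each agent $i$ receives, at rate $r_i$ per unit time, the good that is highest in $\sigma_i$ among the goods not yet exhausted (a good is exhausted once the total amount handed out equals its quantity $q_j$; several agents may receive the same good simultaneously, and whenever a good is exhausted all agents receiving it switch instantly to their next non-exhausted good in their bid). At time $1$ all goods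 are exhausted and all agents have their totals $r_i$; $a^\sigma_{ij}$ denotes the total amount of good $j$ received by agent $i$. *)

From HB Require Import structures.
From mathcomp Require Import all_boot all_order all_algebra all_fingroup.
From mathcomp Require Import reals.
Set Implicit Arguments. Unset Strict Implicit. Unset Printing Implicit Defensive.
Import Order.TTheory GRing.Theory Num.Theory.
Local Open Scope ring_scope.

(* Goods are 'I_m, agents are 'I_n (0-based).  A preference list / bid is a
   permutation p : {perm 'I_m}, where p k is the good ranked at position k
   (p 0 = most preferred). *)

Section SG.
Variables (R : realType) (n m : nat) (r : 'I_n -> R) (q : 'I_m -> R).
Variable sigma : 'I_n -> {perm 'I_m}.

Definition sg_cur (A : {set 'I_m}) (i : 'I_n) : option 'I_m :=
  ohead [seq sigma i k | k <- enum 'I_m & sigma i k \in A].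

Definition sg_rate (A : {set 'I_m}) (j : 'I_m) : R :=
  \sum_(i | sg_cur A i == Some j) r i.

Record sg_state := SGState {
  sg_time  : R;
  sg_alive : {set 'I_m};
  sg_rem   : 'I_m -> R;
  sg_alloc : 'I_n -> 'I_m -> R
}.

(* One phase of the continuous process: between two consecutive exhaustion
   events every agent receives a fixed good at rate r i. *)
Definition sg_step (s : sg_state) : sg_state :=
  let t := sg_time s in
  let A := sg_alive s in
  let rem := sg_rem s in
  let delta := \big[Num.min/(1 - t)]_(j in A | 0 < sg_rate A j)
                  (rem j / sg_rate A j) in
  SGState (t + delta)
    [set j in A | ~~ ((0 < sg_rate A j) && (rem j - delta * sg_rate A j == 0))]
    (fun j => if j \in A then rem j - delta * sg_rate A j else rem j)
    (fun i j => sg_alloc s i j + (if sg_cur A i == Some j then delta * r i else 0)).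

Definition sg_init : sg_state := SGState 0 setT q (fun _ _ => 0).

(* Each phase exhausts at least one good, so m phases run the process to
   time 1.  a^sigma_{ij} := SG_alloc i j. *)
Definition SG_alloc : 'I_n -> 'I_m -> R := sg_alloc (iter m sg_step sg_init).

Definition is_allocation (a : 'I_n -> 'I_m -> R) : Prop :=
  [/\ forall i j, 0 <= a i j,
      forall i, \sum_(j < m) a i j = r i
    & forall j, \sum_(i < n) a i j = q j].
End SG.

Definition lex_pref (R : realType) (m : nat) (p : {perm 'I_m})
    (x y : 'I_m -> R) : Prop :=
  exists k : 'I_m,
    (forall k' : 'I_m, (k' < k)%N -> x (p k') = y (p k')) /\ y (p k) < x (p k).

(* Let D_k be the set of goods exhausted during the first k phases of SG, and
   let a be an allocation such that no agent strictly prefers a^pi to a.  By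
   induction on k, a and a^pi agree on every good of D_k: if some agent i got
   more of g in D_(k+1) under a^pi than under a, then i was being served g
   during a phase s <= k, when every good i ranks above g already lay in
   D_s, a subset of D_k on which a and a^pi agree; so i would prefer a^pi.
   Hence a^pi <= a on the column of g, and as both columns sum to q_g they
   coincide.  Every phase exhausts some good (the remaining supply is
   (1 - t) times the total rate, so by averaging some good with positive rate
   runs out by time 1), hence D_m contains all goods. *)

From HB Require Import structures.
From mathcomp Require Import all_boot all_order all_algebra all_fingroup.
From mathcomp Require Import reals.
From Stdlib Require Import Classical_Prop.
Set Implicit Arguments. Unset Strict Implicit. Unset Printing Implicit Defensive.
Import Order.TTheory GRing.Theory Num.Theory.
Local Open Scope ring_scope.

Lemma ohead_filter_enum_ord m (P : pred 'I_m) k :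
  ohead [seq i <- enum 'I_m | P i] = Some k ->
  P k /\ forall i : 'I_m, (i < k)%N -> ~~ P i.
Proof.
case E: [seq i <- enum 'I_m | P i] => [|k0 s] //= [ek]; subst k0.
have Pk : P k by have := mem_head k s; rewrite -E mem_filter => /andP[].
split=> // i lt_ik; apply/negP => Pi.
have ltn_tr : transitive (fun i j : 'I_m => (i < j)%N).
  by move=> ? ? ?; apply: ltn_trans.
have : sorted (fun i j : 'I_m => (i < j)%N) (k :: s).
  rewrite -E sorted_filter //.
  by have := iota_ltn_sorted 0 m; rewrite -val_enum_ord sorted_map.
have : i \in k :: s by rewrite -E mem_filter Pi mem_enum.
rewrite inE => /predU1P[eq_ik | s_i]; first by rewrite eq_ik ltnn in lt_ik.
move=> /(order_path_min ltn_tr) /allP /(_ i s_i).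
by rewrite ltnNge ltnW.
Qed.

Lemma exists_le_scaled (R : realDomainType) (I : finType) (x y : I -> R) (c : R) :
  (forall i, 0 <= x i) -> (forall i, 0 <= y i) -> 0 < \sum_i y i ->
  \sum_i x i = c * \sum_i y i -> exists i, (0 < y i) && (x i <= c * y i).
Proof.
move=> x_ge0 y_ge0 sum_y_gt0 sum_x; apply/existsP; apply: contraT.
rewrite negb_exists => /forallP x_gt.
have [i /andP[_ yi_gt0]] : exists i, true && (0 < y i).
  by apply: psumr_neq0P => // sum_y0; rewrite sum_y0 ltxx in sum_y_gt0.
have gap_ge0 j : 0 <= x j - c * y j.
  have := x_gt j; rewrite negb_and -leNgt -ltNge.
  case/orP => [y_le0 | /ltW]; last by rewrite subr_ge0.
  have -> : y j = 0 by apply/eqP; rewrite eq_le y_le0 y_ge0.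
  by rewrite mulr0 subr0.
have /eqP : x i - c * y i = 0.
  apply: (@psumr_eq0P _ _ xpredT _ (fun j _ => gap_ge0 j)) => //.
  by rewrite sumrB -mulr_sumr sum_x subrr.
by rewrite subr_eq0 => /eqP xi_eq; have := x_gt i; rewrite yi_gt0 xi_eq lexx.
Qed.

Lemma eq_ler_sum (R : numDomainType) (I : finType) (x y : I -> R) :
  (forall i, x i <= y i) -> \sum_i x i = \sum_i y i -> forall i, x i = y i.
Proof.
move=> le_xy eq_sum i; apply/eqP; rewrite eq_sym -subr_eq0; apply/eqP.
apply: (@psumr_eq0P _ _ predT (fun j => y j - x j)) => // [j _|].
  by rewrite subr_ge0.
by rewrite sumrB eq_sum subrr.
Qed.

Section SynchronizedGreedy.
Variables (R : realType) (n m : nat) (r : 'I_n -> R) (q : 'I_m -> R).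
Variable sigma : 'I_n -> {perm 'I_m}.
Hypothesis r_gt0 : forall i, 0 < r i.
Hypothesis q_gt0 : forall j, 0 < q j.
Hypothesis sum_q : \sum_(j < m) q j = \sum_(i < n) r i.

Local Notation cur := (sg_cur sigma).
Local Notation rate := (sg_rate r sigma).
Local Notation step := (sg_step r sigma).

Lemma sg_cur_Some (A : {set 'I_m}) (i : 'I_n) (j : 'I_m) : cur A i = Some j ->
  j \in A /\ forall k : 'I_m, (k < ((sigma i)^-1)%g j)%N -> sigma i k \notin A.
Proof.
rewrite /sg_cur; case E: [seq k <- enum 'I_m | sigma i k \in A] => [|k s] //= [<-].
have [] := @ohead_filter_enum_ord m (fun k => sigma i k \in A) k; first by rewrite E.
by rewrite permK.
Qed.

Lemma sg_cur_exists (A : {set 'I_m}) (i : 'I_n) (j0 : 'I_m) : j0 \in A -> exists j, cur A i = Some j.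
Proof.
move=> A_j0; rewrite /sg_cur.
case E: [seq k <- enum 'I_m | sigma i k \in A] => [|k s] /=; last by exists (sigma i k).
have : ((sigma i)^-1 j0)%g \in [seq k <- enum 'I_m | sigma i k \in A].
  by rewrite mem_filter permKV A_j0 mem_enum.
by rewrite E.
Qed.

Lemma sg_rate_ge0 (A : {set 'I_m}) (j : 'I_m) : 0 <= rate A j.
Proof. by apply: sumr_ge0 => i _; apply: ltW. Qed.

Lemma sg_rate_notin (A : {set 'I_m}) (j : 'I_m) : j \notin A -> rate A j = 0.
Proof. by move=> A'j; apply: big1 => i /eqP /sg_cur_Some [A_j _]; rewrite A_j in A'j. Qed.

Lemma sum_sg_rate (A : {set 'I_m}) (j0 : 'I_m) : j0 \in A -> \sum_j rate A j = \sum_i r i.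
Proof.
move=> A_j0; rewrite /sg_rate.
under eq_bigr do rewrite big_mkcond.
rewrite exchange_big /=; apply: eq_bigr => i _.
have [j cur_ij] := sg_cur_exists i A_j0.
rewrite (bigD1 j) //= cur_ij eqxx big1 ?addr0 // => k k_neq_j.
by rewrite (inj_eq Some_inj) eq_sym (negbTE k_neq_j).
Qed.

Definition sg_delta (s : sg_state R n m) : R :=
  \big[Num.min/(1 - sg_time s)]_(j in sg_alive s | 0 < rate (sg_alive s) j)
     (sg_rem s j / rate (sg_alive s) j).

Lemma sg_step_time (s : sg_state R n m) : sg_time (step s) = sg_time s + sg_delta s.
Proof. by []. Qed.

Lemma sg_step_alive (s : sg_state R n m) : sg_alive (step s) =
  [set j in sg_alive s | ~~ ((0 < rate (sg_alive s) j) &&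
       (sg_rem s j - sg_delta s * rate (sg_alive s) j == 0))].
Proof. by []. Qed.

Lemma sg_step_rem (s : sg_state R n m) (j : 'I_m) :
  sg_rem (step s) j = sg_rem s j - sg_delta s * rate (sg_alive s) j.
Proof.
rewrite /sg_step /= -/(sg_delta s); case: ifP => // A'j.
by rewrite sg_rate_notin ?A'j // mulr0 subr0.
Qed.

Lemma sg_step_alloc (s : sg_state R n m) (i : 'I_n) (j : 'I_m) : sg_alloc (step s) i j =
  sg_alloc s i j + (if cur (sg_alive s) i == Some j then sg_delta s * r i else 0).
Proof. by []. Qed.

Lemma sg_step_alive_sub (s : sg_state R n m) : sg_alive (step s) \subset sg_alive s.
Proof. by apply/subsetP => j; rewrite sg_step_alive inE => /andP[]. Qed.

Lemma sg_delta_le (s : sg_state R n m) (j : 'I_m) : j \in sg_alive s -> 0 < rate (sg_alive s) j ->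
  sg_delta s <= sg_rem s j / rate (sg_alive s) j.
Proof. by move=> A_j rate_gt0; apply: bigmin_le_cond; rewrite A_j rate_gt0. Qed.

Lemma sg_delta_cases (s : sg_state R n m) : sg_delta s = 1 - sg_time s \/
  exists2 j, (j \in sg_alive s) && (0 < rate (sg_alive s) j) &
     sg_delta s = sg_rem s j / rate (sg_alive s) j.
Proof.
apply: (big_ind (fun d => d = 1 - sg_time s \/ exists2 j,
   (j \in sg_alive s) && (0 < rate (sg_alive s) j) &
     d = sg_rem s j / rate (sg_alive s) j)) => [|d d' d_ok d'_ok|j j_ok].
- by left.
- by rewrite minEle; case: ifP.
- by right; exists j.
Qed.

Definition sg_inv (s : sg_state R n m) : Prop :=
  [/\ forall j, j \notin sg_alive s -> sg_rem s j = 0,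
      forall j, 0 <= sg_rem s j,
      forall j, \sum_i sg_alloc s i j + sg_rem s j = q j
    & \sum_j sg_rem s j = (1 - sg_time s) * \sum_i r i].

Lemma sg_inv_init : sg_inv (sg_init n q).
Proof.
split=> /= [j | j | j |].
- by rewrite inE.
- exact: ltW.
- by rewrite big1 ?add0r.
- by rewrite subr0 mul1r sum_q.
Qed.

Lemma sg_inv_step (s : sg_state R n m) : sg_inv s -> sg_inv (step s).
Proof.
move=> [rem_dead rem_ge0 conserve rem_total]; split=> [j|j|j|].
- rewrite sg_step_rem sg_step_alive inE negb_and negbK.
  case/orP => [A'j | /andP[_ /eqP //]].
  by rewrite sg_rate_notin // mulr0 subr0 rem_dead.
- rewrite sg_step_rem.
  have [A_j|A'j] := boolP (j \in sg_alive s); last first.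
    by rewrite sg_rate_notin // mulr0 subr0.
  have := sg_rate_ge0 (sg_alive s) j; rewrite le_eqVlt => /orP[/eqP <- | rate_gt0].
    by rewrite mulr0 subr0.
  by rewrite subr_ge0 -ler_pdivlMr // sg_delta_le.
- rewrite sg_step_rem -(conserve j).
  under eq_bigr do rewrite sg_step_alloc.
  rewrite big_split /= /sg_rate mulr_sumr [X in _ - X]big_mkcond /=.
  by rewrite addrACA subrr addr0.
- rewrite sg_step_time; under eq_bigr do rewrite sg_step_rem.
  rewrite sumrB -mulr_sumr.
  have [A0 | [j0 A_j0]] := set_0Vmem (sg_alive s); last first.
    by rewrite rem_total (sum_sg_rate A_j0) -mulrBl opprD addrA.
  have delta_end : sg_delta s = 1 - sg_time s.
    by rewrite /sg_delta big_pred0 // => j; rewrite A0 inE.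
  rewrite big1 => [|j _]; last by apply: rem_dead; rewrite A0 inE.
  rewrite big1 => [|j _]; last by rewrite sg_rate_notin // A0 inE.
  by rewrite delta_end mulr0 subr0 addrCA subrr addr0 subrr mul0r.
Qed.

Lemma sum_r_gt0 (j0 : 'I_m) : 0 < \sum_i r i.
Proof.
rewrite -sum_q (bigD1 j0) //= ltr_pwDl // sumr_ge0 // => j _.
exact: ltW.
Qed.

Lemma sg_step_exhausts (s : sg_state R n m) (j0 : 'I_m) :
  sg_inv s -> j0 \in sg_alive s ->
  exists2 k, k \in sg_alive s & k \notin sg_alive (step s).
Proof.
move=> [_ rem_ge0 _ rem_total] A_j0; set A := sg_alive s in A_j0 *.
have [j /andP[rate_gt0 rem_le]] : exists j, (0 < rate A j) &&
    (sg_rem s j <= (1 - sg_time s) * rate A j).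
  apply: exists_le_scaled; rewrite ?(sum_sg_rate A_j0) //.
  - exact: sg_rate_ge0.
  - exact: sum_r_gt0.
have A_j : j \in A by apply: contraTT rate_gt0 => A'j; rewrite sg_rate_notin ?ltxx.
have exhausted k : k \in A -> 0 < rate A k ->
    sg_delta s = sg_rem s k / rate A k -> k \notin sg_alive (step s).
  move=> A_k rate_k_gt0 delta_k.
  by rewrite sg_step_alive inE A_k rate_k_gt0 delta_k divfK ?subrr ?eqxx // gt_eqF.
have [delta_end | [k /andP[A_k rate_k_gt0] delta_k]] := sg_delta_cases s.
  exists j => //; apply: exhausted => //; apply/eqP.
  by rewrite eq_le sg_delta_le //= delta_end ler_pdivrMr.
by exists k => //; apply: exhausted.
Qed.

Lemma card_sg_step_alive (s : sg_state R n m) (j0 : 'I_m) :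
  sg_inv s -> j0 \in sg_alive s -> (#|sg_alive (step s)| < #|sg_alive s|)%N.
Proof.
move=> inv_s A_j0; have [k A_k A'k] := sg_step_exhausts inv_s A_j0.
by apply/proper_card/properP; split; [exact: sg_step_alive_sub | exists k].
Qed.

Definition sg_iter (k : nat) : sg_state R n m := iter k step (sg_init n q).

Lemma sg_inv_iter k : sg_inv (sg_iter k).
Proof. by elim: k => [|k IHk]; [exact: sg_inv_init | exact: sg_inv_step]. Qed.

Lemma sg_iter_alive_sub k1 k2 :
  (k1 <= k2)%N -> sg_alive (sg_iter k2) \subset sg_alive (sg_iter k1).
Proof.
move=> /subnKC <-; elim: (k2 - k1)%N => [|d IHd]; first by rewrite addn0.
by rewrite addnS (subset_trans (sg_step_alive_sub _)).
Qed.

Lemma card_sg_iter_alive k : (#|sg_alive (sg_iter k)| <= m - k)%N.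
Proof.
elim: k => [|k IHk]; first by rewrite /sg_iter /= cardsT card_ord subn0.
have [A0 | [j0 A_j0]] := set_0Vmem (sg_alive (sg_iter k)).
  by have := sg_iter_alive_sub (leqnSn k); rewrite A0 subset0 => /eqP ->; rewrite cards0.
have := card_sg_step_alive (sg_inv_iter k) A_j0.
by rewrite -/(sg_iter k.+1) subnS => /leq_trans/(_ IHk); rewrite -ltnS; case: (m - k)%N.
Qed.

Lemma sg_iter_alive_m : sg_alive (sg_iter m) = set0.
Proof. by apply/eqP; rewrite -cards_eq0 -leqn0 -(subnn m) card_sg_iter_alive. Qed.

Lemma sg_iter_alloc_supported k i j : sg_alloc (sg_iter k) i j != 0 ->
  exists2 s, (s < k)%N & cur (sg_alive (sg_iter s)) i = Some j.
Proof.
elim: k => [|k IHk]; first by rewrite eqxx.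
rewrite /sg_iter iterS sg_step_alloc -/(sg_iter k).
have [cur_ij _ | _] := eqVneq (cur (sg_alive (sg_iter k)) i) (Some j).
  by exists k.
by rewrite addr0 => /IHk [s lt_sk cur_ij]; exists s => //; apply: ltnW.
Qed.

Lemma sum_SG_alloc j : \sum_i SG_alloc r q sigma i j = q j.
Proof.
have [rem_dead _ conserve _] := sg_inv_iter m.
by rewrite -(conserve j) (rem_dead j) ?addr0 // sg_iter_alive_m inE.
Qed.

Section Undominated.
Variable a : 'I_n -> 'I_m -> R.
Hypothesis a_alloc : is_allocation r q a.
Hypothesis SG_not_better : forall i, ~ lex_pref (sigma i) (SG_alloc r q sigma i) (a i).

Lemma SG_alloc_le_exhausted k g :
  (forall g', g' \notin sg_alive (sg_iter k) -> forall i, a i g' = SG_alloc r q sigma i g') ->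
  g \notin sg_alive (sg_iter k.+1) -> forall i, SG_alloc r q sigma i g <= a i g.
Proof.
move=> agree g_dead i; rewrite leNgt; apply/negP => a_lt.
have [a_ge0 _ _] := a_alloc.
have SG_ig_neq0 : SG_alloc r q sigma i g != 0.
  by rewrite gt_eqF // (le_lt_trans (a_ge0 i g) a_lt).
have [s _ cur_ig] := sg_iter_alloc_supported SG_ig_neq0.
have [A_g before_g] := sg_cur_Some cur_ig.
have le_sk : (s <= k)%N.
  rewrite leqNgt; apply: contraNN g_dead => lt_ks.
  exact: subsetP (sg_iter_alive_sub lt_ks) _ A_g.
apply: (@SG_not_better i); exists ((sigma i)^-1 g)%g; rewrite permKV; split=> // k' lt_k'.
apply/esym/agree; apply: contra (before_g k' lt_k').
exact: subsetP (sg_iter_alive_sub le_sk) _.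
Qed.

Lemma agree_exhausted k g :
  g \notin sg_alive (sg_iter k) -> forall i, a i g = SG_alloc r q sigma i g.
Proof.
elim: k g => [g|k IHk g g_dead i]; first by rewrite inE.
have [_ _ a_col] := a_alloc.
apply/esym/(eq_ler_sum (SG_alloc_le_exhausted IHk g_dead)).
by rewrite a_col sum_SG_alloc.
Qed.

Lemma SG_alloc_undominated i j : a i j = SG_alloc r q sigma i j.
Proof. by apply: (agree_exhausted (k := m)); rewrite sg_iter_alive_m inE. Qed.

End Undominated.
End SynchronizedGreedy.

Theorem theorem1 (R : realType) (n m : nat) (r : 'I_n -> R) (q : 'I_m -> R)
    (pi : 'I_n -> {perm 'I_m}) :
  (forall i, 0 < r i) -> (forall j, 0 < q j) ->
  \sum_(j < m) q j = \sum_(i < n) r i ->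
  forall a : 'I_n -> 'I_m -> R,
    is_allocation r q a ->
    ~ (forall i j, a i j = SG_alloc r q pi i j) ->
    exists i : 'I_n, lex_pref (pi i) (SG_alloc r q pi i) (a i).
Proof.
move=> r_gt0 q_gt0 sum_q a a_alloc a_neq_SG; apply: NNPP => SG_not_better.
apply: a_neq_SG; apply: (SG_alloc_undominated r_gt0 q_gt0 sum_q a_alloc).
by move=> i SG_better; apply: SG_not_better; exists i.
Qed.
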